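(* For every $g\ge 1$, the orientation $\mathcal{H}_g^e$ is a Pfaffian orientation of $\mathcal{H}_g$; that is, every nice cycle of $\mathcal{H}_g$ is oddly oriented relative to $\mathcal{H}_g^e$.
   Context: The graphs $\mathcal{H}_g$ with four hub vertices $v_1,v_2,v_3,v_4$ and orientations $\mathcal{H}_g^e$ are defined recursively. $\mathcal{H}_1$ is the 4-cycle with edges $\{v_1,v_2\},\{v_1,v_3\},\{v_2,v_4\},\{v_3,v_4\}$, and $\mathcal{H}_1^e$ orients them as $v_1\to v_2$, $v_1\to v_3$, $v_4\to v_2$, $v_3\to v_4$. For $g>1$, take four disjoint copies $\mathcal{H}_{g-1}^{(i)}$, $i=1,2,3,4$, of $\mathcal{H}_{g-1}$, each oriented as a copy of $\mathcal{H}_{g-1}^e$, with hubs $v_k^{(i)}$ corresponding to $v_k$; identify $v_1^{(1)}$ and $v_1^{(4)}$ as the hub $v_1$ of $\mathcal{H}_g$, $v_2^{(2)}$ and $v_1^{(3)}$ as $v_4$, $v_2^{(1)}$ and $v_1^{(2)}$ as $v_3$, and $v_2^{(3)}$ and $v_2^{(4)}$ as $v_2$; $\mathcal{H}_g^e$ is the union of the orientations of the four copies. (Equivalently, $\mathcal{H}_g$ arises from $\mathcal{H}_{g-1}$ by keeping each edge $\{u,v\}$ and adding two new adjacent vertices $w,w'$ with $w$ adjacent to $u$ and $w'$ adjacent to $v$.) All cycles are elementary. A cycle $C$ of a graph $G$ is nice if the subgraph of $G$ induced by the vertices not on $C$ has a perfect matching. An even cycle is oddly oriented if, traversing it in either direction,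 an odd number of its edges are oriented in the direction of traversal. An orientation is Pfaffian if every nice cycle is oddly oriented. *)

From mathcomp Require Import all_boot.
Set Implicit Arguments. Unset Strict Implicit. Unset Printing Implicit Defensive.

(* An oriented (simple) graph on natural-number vertex labels.
   - og_bound : every vertex label is < og_bound (used for relabelling copies)
   - og_verts : the vertex set
   - og_arcs  : the orientation: each edge {u,v} of the underlying graph is
                listed exactly once, as the arc (u,v) meaning u -> v
   - og_hubs  : the hub vertices (v1, v2, v3, v4) *)
Record ograph := OGraph {
  og_bound : nat;
  og_verts : seq nat;
  og_arcs  : seq (nat * nat);
  og_hubs  : nat * nat * nat * nat
}.

Definition hub1 (G : ograph) : nat := (og_hubs G).1.1.1.
Definition hub2 (G : ograph) : nat := (og_hubs G).1.1.2.

(* H_1^e : hubs v1=0, v2=1, v3=2, v4=3;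
   arcs v1->v2, v1->v3, v4->v2, v3->v4. *)
Definition H1 : ograph :=
  OGraph 4 [:: 0; 1; 2; 3] [:: (0, 1); (0, 2); (3, 1); (2, 3)] (0, 1, 2, 3).

(* Relabelling of vertex x of copy i (i = 0,1,2,3 stands for copies 1,2,3,4)
   of G = H_{g-1} (with h1 := v1, h2 := v2 of G, N := bound):
   copy i's vertex x gets label i*N + x, except for the identifications
     v1^(1) = v1^(4)          (label h1,       hub v1 of H_g)
     v2^(1) = v1^(2)          (label h2,       hub v3 of H_g)
     v2^(2) = v1^(3)          (label N + h2,   hub v4 of H_g)
     v2^(3) = v2^(4)          (label 2N + h2,  hub v2 of H_g). *)
Definition relab (G : ograph) (i x : nat) : nat :=
  let N := og_bound G in
  let h1 := hub1 G in
  let h2 := hub2 G in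
  match i with
  | 0 => x
  | 1 => if x == h1 then h2 else N + x
  | 2 => if x == h1 then N + h2 else 2 * N + x
  | _ => if x == h1 then h1 else if x == h2 then 2 * N + h2 else 3 * N + x
  end.

Definition relab_arc (G : ograph) (i : nat) (a : nat * nat) : nat * nat :=
  (relab G i a.1, relab G i a.2).

Definition Hstep (G : ograph) : ograph :=
  let N := og_bound G in
  let h2 := hub2 G in
  OGraph (4 * N)
    (undup (flatten [seq [seq relab G i x | x <- og_verts G] | i <- iota 0 4]))
    (flatten [seq [seq relab_arc G i a | a <- og_arcs G] | i <- iota 0 4])
    (hub1 G, 2 * N + h2, h2, N + h2).

(* H g = H_g with its orientation H_g^e, for g >= 1 (H 0 is unused). *)
Definition H (g : nat) : ograph := iter g.-1 Hstep H1.

Definition adj (G : ograph) (x y : nat) : bool :=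
  ((x, y) \in og_arcs G) || ((y, x) \in og_arcs G).

Definition is_cycle (G : ograph) (C : seq nat) : Prop :=
  [/\ 3 <= size C, uniq C, all (fun v => v \in og_verts G) C & cycle (adj G) C].

(* The subgraph induced by the vertices not on C has a perfect matching:
   a set M of edges with both ends off C covering every vertex off C
   exactly once. *)
Definition nice (G : ograph) (C : seq nat) : Prop :=
  is_cycle G C /\
  exists M : seq (nat * nat),
    all (fun e => [&& e \in og_arcs G, e.1 \notin C & e.2 \notin C]) M /\
    forall v, v \in og_verts G -> v \notin C ->
      count (fun e => (e.1 == v) || (e.2 == v)) M = 1.

Definition cyc_pairs (C : seq nat) : seq (nat * nat) := zip C (rot 1 C).

(* Even cycle with an odd number of edges oriented along the traversal,
   in both directions of traversal. *)
Definition oddly_oriented (G : ograph) (C : seq nat) : Prop :=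
  [/\ ~~ odd (size C),
      odd (count (fun p => p \in og_arcs G) (cyc_pairs C)) &
      odd (count (fun p => (p.2, p.1) \in og_arcs G) (cyc_pairs C))].

Definition pfaffian (G : ograph) : Prop :=
  forall C : seq nat, nice G C -> oddly_oriented G C.

From mathcomp Require Import all_boot zify.
Set Implicit Arguments. Unset Strict Implicit. Unset Printing Implicit Defensive.

(* H_g is H_1 with each
   arc u -> v replaced by a copy of H_(g-1) glued at u by its hub v1 and at v by its hub
   v2; the four hubs of H_g are exactly the glueing vertices.  Along with the claim we
   carry by induction a parity statement for simple paths between v1 and v2: they have
   odd length, and from v1 they use an odd number of edges forwards and an even number
   backwards (from v2 the other way round), just like the single arc v1 -> v2.  A cycle
   of H_g meeting at most one hub lies in a single copy.  A path or cycle meeting more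
   hubs splits at them into such hub-to-hub paths inside single copies, so its parities
   are those of the corresponding walk of H_1, where they are checked by enumeration. *)

Definition steps (T : Type) (w : seq T) : seq (T * T) := zip w (behead w).

Lemma steps_cat (T : Type) (x : T) p1 p2 :
  steps (x :: p1 ++ p2) = steps (x :: p1) ++ steps (last x p1 :: p2).
Proof. by elim: p1 x => [|y p1 IH] x //; rewrite /steps /= in IH *; rewrite IH. Qed.

Lemma steps_map (T U : Type) (f : T -> U) w :
  steps (map f w) = map (fun q => (f q.1, f q.2)) (steps w).
Proof.
case: w => [|x w] //; rewrite /steps /=.
by elim: w x => [|y w IH] x //=; rewrite IH.
Qed.

Lemma mem_steps (T : eqType) (w : seq T) q : q \in steps w -> (q.1 \in w) && (q.2 \in w).
Proof.
case: w => [|x w] //; rewrite /steps /=.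
elim: w x => [|y w IH] x //= /predU1P [-> | /IH /andP [q1 q2]].
  by rewrite !inE !eqxx orbT.
by rewrite in_cons q1 orbT in_cons q2 orbT.
Qed.

Lemma last_filter (T : Type) (a : pred T) x p : a (last x p) -> last x (filter a p) = last x p.
Proof.
elim: p x => [|y p IH] x //= a_last; case: ifP => [_ | a_y]; first exact: IH.
by case: p IH a_last => [|w p] IH /= a_last; [rewrite a_last in a_y | apply: IH].
Qed.

Lemma take_zip (S T : Type) n (s : seq S) (t : seq T) :
  take n (zip s t) = zip (take n s) (take n t).
Proof. by elim: n s t => [|n IH] [|x s] [|y t] //=; rewrite IH. Qed.

Lemma drop_zip (S T : Type) n (s : seq S) (t : seq T) :
  drop n (zip s t) = zip (drop n s) (drop n t).
Proof. by elim: n s t => [|n IH] [|x s] [|y t] //=; case: (drop _ _). Qed.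

Lemma rot_zip (S T : Type) n (s : seq S) (t : seq T) : size s = size t ->
  rot n (zip s t) = zip (rot n s) (rot n t).
Proof. by move=> eq_st; rewrite /rot zip_cat ?take_zip ?drop_zip // !size_drop eq_st. Qed.

Lemma cyc_pairs_cons x s : cyc_pairs (x :: s) = steps (x :: rcons s x).
Proof.
rewrite /cyc_pairs /steps rot1_cons /= -[x :: rcons s x]/(rcons (x :: s) x).
by rewrite -[rcons (x :: s) x]cats1 -[rcons s x]cats0 zip_cat ?cats0 ?size_rcons.
Qed.

Lemma perm_cyc_pairs_rot n C : perm_eq (cyc_pairs (rot n C)) (cyc_pairs C).
Proof. by rewrite /cyc_pairs rot_rot -rot_zip ?size_rot // perm_rot. Qed.

Lemma is_cycle_rot G n C : is_cycle G C -> is_cycle G (rot n C).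
Proof.
have perm_C : perm_eq (rot n C) C by rewrite perm_rot.
by case=> *; split; rewrite ?size_rot ?rot_uniq ?rot_cycle ?(perm_all _ perm_C).
Qed.

Lemma oddly_oriented_rot G n C : oddly_oriented G (rot n C) -> oddly_oriented G C.
Proof. by move/permP: (perm_cyc_pairs_rot n C) => cnt; rewrite /oddly_oriented size_rot !cnt. Qed.

Definition along (G : ograph) : pred (nat * nat) := fun q => q \in og_arcs G.
Definition against (G : ograph) : pred (nat * nat) := fun q => (q.2, q.1) \in og_arcs G.

Lemma oddly_orientedE G C : oddly_oriented G C =
  [/\ ~~ odd (size C), odd (count (along G) (cyc_pairs C)) & odd (count (against G) (cyc_pairs C))].
Proof. by []. Qed.

Definition hub_paths_parity (G : ograph) : Prop :=
  forall x p, uniq (x :: p) -> {subset x :: p <= og_verts G} -> path (adj G) x p ->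
  x \in [:: hub1 G; hub2 G] -> last x p \in [:: hub1 G; hub2 G] -> x != last x p ->
  [/\ odd (size p), odd (count (along G) (steps (x :: p))) = (x == hub1 G)
    & odd (count (against G) (steps (x :: p))) = (x == hub2 G)].

Definition cycles_oddly_oriented (G : ograph) : Prop :=
  forall C, is_cycle G C -> oddly_oriented G C.

Fixpoint seqs_over (T : Type) (r : seq T) n : seq (seq T) :=
  if n is n'.+1 then [::] :: [seq x :: s | x <- r, s <- seqs_over r n'] else [:: [::]].

Lemma mem_seqs_over (T : eqType) (r : seq T) n s :
  size s <= n -> {subset s <= r} -> s \in seqs_over r n.
Proof.
elim: n s => [|n IH] [|x s] //= size_s sub_xs.
rewrite inE allpairs_f ?orbT ?sub_xs ?mem_head // IH // => y s_y.
by rewrite sub_xs // inE s_y orbT.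
Qed.

Lemma mem_seqs_over_H1 s : uniq s -> {subset s <= og_verts H1} -> s \in seqs_over (og_verts H1) 4.
Proof. by move=> uniq_s sub_s; rewrite mem_seqs_over // (uniq_leq_size uniq_s sub_s). Qed.

Lemma H1_cycles_oddly_oriented s : {subset s <= og_verts H1} -> uniq s -> 2 <= size s ->
  cycle (adj H1) s -> oddly_oriented H1 s.
Proof.
move=> sub_s uniq_s size_s cycle_s.
have /allP/(_ s (mem_seqs_over_H1 uniq_s sub_s)) : all (fun s =>
    [==> uniq s, 2 <= size s, cycle (adj H1) s => [&& ~~ odd (size s),
      odd (count (along H1) (cyc_pairs s)) & odd (count (against H1) (cyc_pairs s))]])
  (seqs_over (og_verts H1) 4) by [].
by rewrite uniq_s size_s cycle_s => /and3P [].
Qed.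

Lemma H1_hub_paths_parity : hub_paths_parity H1.
Proof.
move=> x p uniq_xp sub_xp path_xp.
have /allP/(_ _ (mem_seqs_over_H1 uniq_xp sub_xp)) : all (fun s => if s is x :: p then
    [==> uniq (x :: p), path (adj H1) x p, x \in [:: 0; 1], last x p \in [:: 0; 1],
      x != last x p => [&& odd (size p), odd (count (along H1) (steps (x :: p))) == (x == 0)
      & odd (count (against H1) (steps (x :: p))) == (x == 1)]] else true)
  (seqs_over (og_verts H1) 4) by [].
rewrite uniq_xp path_xp => /= test x_hub last_hub x_last.
by move: test; rewrite x_hub last_hub x_last => /and3P [-> /eqP -> /eqP ->].
Qed.

Definition wf_ograph (G : ograph) : Prop :=
  [/\ all (fun v => v < og_bound G) (og_verts G),
      all (fun a => [&& a.1 \in og_verts G, a.2 \in og_verts G & a.1 != a.2]) (og_arcs G),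
      hub1 G < og_bound G, hub2 G < og_bound G & hub1 G != hub2 G].

Definition hubs (G : ograph) : seq nat :=
  let: (v1, v2, v3, v4) := og_hubs G in [:: v1; v2; v3; v4].

(* In [Hstep G] the hub at position i is the vertex that replaces vertex i of H_1. *)
Definition hub_index (G : ograph) (y : nat) : nat := index y (hubs G).

(* The unique vertex shared by copies [j] and [k]; copies 0, 2 and copies 1, 3 are
   disjoint, and then the value is irrelevant. *)
Definition common_vertex (G : ograph) (j k : nat) : nat :=
  let N := og_bound G in
  match minn j k, maxn j k with
  | 0, 1 => hub2 G
  | 1, 2 => N + hub2 G
  | 2, 3 => 2 * N + hub2 G
  | _, _ => hub1 G
  end.

Lemma H1_arc_asym a b : (a, b) \in og_arcs H1 -> (b, a) \notin og_arcs H1.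
Proof. by rewrite !inE; case/or4P => /eqP [-> ->]. Qed.

Ltac eq_cases :=
  repeat (case: ifP => [/eqP ? | /negbT/eqP ?]); repeat (case: eqP => ? /=); lia.

Section Substitution.

Variable G : ograph.
Hypothesis G_wf : wf_ograph G.

Local Notation N := (og_bound G).
Local Notation G4 := (Hstep G).
Local Notation copy j := [seq relab G j a | a <- og_verts G].
Local Notation hub := (fun y => y \in hubs G4).
Local Notation hidx := (hub_index G4).

Lemma hubs_step : hubs G4 = [:: hub1 G; 2 * N + hub2 G; hub2 G; N + hub2 G].
Proof. by []. Qed.

Lemma uniq_hubs_step : uniq (hubs G4).
Proof. by case: G_wf => _ _ h1_lt h2_lt hub12; rewrite hubs_step /= !inE; eq_cases. Qed.

Lemma hub_index_step :
  [/\ hidx (hub1 G) = 0, hidx (2 * N + hub2 G) = 1,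
      hidx (hub2 G) = 2 & hidx (N + hub2 G) = 3].
Proof.
have := index_uniq 0 _ uniq_hubs_step; rewrite /hub_index hubs_step => idx.
by split; [exact: (idx 0) | exact: (idx 1) | exact: (idx 2) | exact: (idx 3)].
Qed.

Lemma copy_arc j : j < 4 ->
  (hidx (relab G j (hub1 G)), hidx (relab G j (hub2 G))) \in og_arcs H1.
Proof.
case: G_wf => _ _ _ _ hub12; have [i1 i2 i3 i4] := hub_index_step.
have hub21 : (hub2 G == hub1 G) = false by rewrite eq_sym (negbTE hub12).
by case: j => [|[|[|[|j]]]] // _; cbn [relab]; rewrite ?eqxx ?hub21 ?eqxx ?i1 ?i2 ?i3 ?i4.
Qed.

Lemma relab_lt j a : j < 4 -> a < N -> relab G j a < 4 * N.
Proof. by case: G_wf => _ _ h1_lt h2_lt hub12; case: j => [|[|[|[|j]]]] //= _; eq_cases. Qed.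

Lemma relab_inj j a b : a < N -> b < N -> relab G j a = relab G j b -> a = b.
Proof. by case: G_wf => _ _ h1_lt h2_lt hub12; case: j => [|[|[|j]]] /=; eq_cases. Qed.

Lemma mem_hubs_relab j a : a < N -> (relab G j a \in hubs G4) = (a \in [:: hub1 G; hub2 G]).
Proof.
case: G_wf => _ _ h1_lt h2_lt hub12; rewrite hubs_step !inE.
by case: j => [|[|[|j]]] /=; eq_cases.
Qed.

Lemma relab_meet j k a b : j < 4 -> k < 4 -> j != k -> a < N -> b < N ->
  relab G j a = relab G k b -> relab G j a = common_vertex G j k.
Proof.
case: G_wf => _ _ h1_lt h2_lt hub12; rewrite /relab /common_vertex.
by case: j => [|[|[|[|j]]]] //; case: k => [|[|[|[|k]]]] //= _ _ _; eq_cases.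
Qed.

Lemma common_vertex_hub j k : common_vertex G j k \in hubs G4.
Proof.
rewrite hubs_step /common_vertex !inE.
by case: (minn j k) => [|[|[|?]]]; case: (maxn j k) => [|[|[|[|?]]]]; rewrite !eqxx ?orbT.
Qed.

Lemma hidx_inj : {in hubs G4 &, injective hidx}.
Proof. by move=> a b; rewrite /hub_index; apply: index_inj. Qed.

Lemma hidx_H1 y : y \in hubs G4 -> hidx y \in og_verts H1.
Proof.
by rewrite -[og_verts H1]/(iota 0 4) mem_iota /hub_index -index_mem.
Qed.

Lemma verts_lt v : v \in og_verts G -> v < N.
Proof. by case: G_wf => /allP verts_lt _ _ _ _ /verts_lt. Qed.

Lemma arc_ends a b : (a, b) \in og_arcs G -> [&& a \in og_verts G, b \in og_verts G & a != b].
Proof. by case: G_wf => _ /allP arc_ends _ _ _ /arc_ends. Qed.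

Lemma mem_verts_step j a : j < 4 -> a \in og_verts G -> relab G j a \in og_verts G4.
Proof.
move=> j_lt a_G; rewrite mem_undup; apply/flattenP; exists (copy j); last exact: map_f.
by apply/mapP; exists j; rewrite ?mem_iota.
Qed.

Lemma mem_arcs_step j a : j < 4 -> a \in og_arcs G -> relab_arc G j a \in og_arcs G4.
Proof.
move=> j_lt a_G; apply/flattenP; exists [seq relab_arc G j a | a <- og_arcs G]; last exact: map_f.
by apply/mapP; exists j; rewrite ?mem_iota.
Qed.

Lemma verts_stepP y : y \in og_verts G4 -> exists2 j, j < 4 & y \in copy j.
Proof. by rewrite mem_undup => /flattenP [s /mapP [j]]; rewrite mem_iota => j_lt -> y_j; exists j. Qed.

Lemma arcs_stepP q : q \in og_arcs G4 ->
  exists2 j, j < 4 & exists2 a, a \in og_arcs G & q = relab_arc G j a.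
Proof.
case/flattenP => s /mapP [j]; rewrite mem_iota => j_lt -> /mapP [a a_G ->].
by exists j => //; exists a.
Qed.

Lemma arc_relab j a b : j < 4 -> a < N -> b < N ->
  ((relab G j a, relab G j b) \in og_arcs G4) = ((a, b) \in og_arcs G).
Proof.
move=> j_lt a_lt b_lt; apply/idP/idP => [|ab_G]; last exact: (mem_arcs_step j_lt ab_G).
case/arcs_stepP => k k_lt [[c d] cd_G [rac rbd]].
have /and3P [/verts_lt c_lt /verts_lt d_lt c_d] := arc_ends cd_G.
have [jk | j_k] := eqVneq j k.
  by subst k; rewrite (relab_inj a_lt c_lt rac) (relab_inj b_lt d_lt rbd).
have meet_a := relab_meet j_lt k_lt j_k a_lt c_lt rac.
have meet_b := relab_meet j_lt k_lt j_k b_lt d_lt rbd.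
have rcd : relab G k c = relab G k d by rewrite -rac -rbd meet_a meet_b.
by rewrite (relab_inj c_lt d_lt rcd) eqxx in c_d.
Qed.

Lemma adj_relab_mono j : j < 4 ->
  {in (fun v => v < N) &, {mono relab G j : a b / adj G a b >-> adj G4 a b}}.
Proof. by move=> j_lt a b a_lt b_lt; rewrite /adj !arc_relab. Qed.

Lemma adj_step_copy x y : adj G4 x y -> exists2 k, k < 4 & (x \in copy k) && (y \in copy k).
Proof.
by case/orP => /arcs_stepP [k k_lt [[c d] /arc_ends /and3P [c_G d_G _] [-> ->]]];
  exists k => //; rewrite !map_f.
Qed.

Lemma adj_step_nonhub j y w : j < 4 -> y \in copy j -> y \notin hubs G4 -> adj G4 y w ->
  w \in copy j.
Proof.
move=> j_lt /mapP [a /verts_lt a_lt ->] a_hub.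
have stay k c : k < 4 -> c \in og_verts G -> relab G j a = relab G k c -> k = j.
  move=> k_lt /verts_lt c_lt rac; apply/eqP/negPn/negP; rewrite eq_sym => j_k.
  by rewrite (relab_meet j_lt k_lt j_k a_lt c_lt rac) common_vertex_hub in a_hub.
case/orP => /arcs_stepP [k k_lt [[c d] /arc_ends /and3P [c_G d_G _] []]].
  by move=> y_c ->; rewrite -(stay k c) ?map_f.
by move=> -> y_d; rewrite -(stay k d) ?map_f.
Qed.

Lemma path_in_copy j x p : j < 4 -> x \in copy j -> path (adj G4) x p ->
  ~~ has hub (belast x p) -> {subset p <= copy j}.
Proof.
move=> j_lt; elim: p x => [|y p IH] x //= x_j /andP [xy yp] /norP [x_hub p_hub].
have y_j := adj_step_nonhub j_lt x_j x_hub xy.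
by move=> w; rewrite inE => /predU1P [-> | /(IH y y_j yp p_hub)].
Qed.

Lemma lift_copy j s : {subset s <= copy j} ->
  exists2 s0, {subset s0 <= og_verts G} & s = map (relab G j) s0.
Proof.
elim: s => [|y s IH] sub_ys; first by exists [::].
have [s0 sub_s0 ->] : exists2 s0, {subset s0 <= og_verts G} & s = map (relab G j) s0.
  by apply: IH => w w_s; rewrite sub_ys // inE w_s orbT.
have /mapP [a a_G ->] := sub_ys y (mem_head y s).
by exists (a :: s0) => // w; rewrite inE => /predU1P [-> | /sub_s0].
Qed.

Lemma count_steps_relab j w : j < 4 -> {subset w <= og_verts G} ->
  count (along G4) (steps (map (relab G j) w)) = count (along G) (steps w) /\
  count (against G4) (steps (map (relab G j) w)) = count (against G) (steps w).
Proof.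
move=> j_lt sub_w; rewrite steps_map !count_map.
by split; apply: eq_in_count => -[a b] /mem_steps /andP [/sub_w/verts_lt a_lt /sub_w/verts_lt b_lt];
  rewrite /= /along /against /= arc_relab.
Qed.

Lemma count_cyc_pairs_relab j C : j < 4 -> {subset C <= og_verts G} ->
  count (along G4) (cyc_pairs (map (relab G j) C)) = count (along G) (cyc_pairs C) /\
  count (against G4) (cyc_pairs (map (relab G j) C)) = count (against G) (cyc_pairs C).
Proof.
case: C => [|x s] // j_lt sub_xs.
rewrite map_cons !cyc_pairs_cons -map_rcons -map_cons; apply: count_steps_relab => // v.
by rewrite inE mem_rcons => /predU1P [-> | //]; apply: sub_xs; rewrite mem_head.
Qed.

Lemma cycle_in_copy_oddly_oriented j C : cycles_oddly_oriented G -> j < 4 ->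
  is_cycle G4 C -> {subset C <= copy j} -> oddly_oriented G4 C.
Proof.
move=> G_odd j_lt [size_C uniq_C _ cycle_C] /lift_copy [C0 sub_C0 def_C].
have lt_C0 : all (fun v => v < N) C0 by apply/allP => v /sub_C0/verts_lt.
have [|even_C0 along_C0 against_C0] := G_odd C0.
  split; first by rewrite def_C size_map in size_C.
  - by move: uniq_C; rewrite def_C => /map_uniq.
  - by apply/allP.
  - by rewrite def_C (mono_cycle_in (adj_relab_mono j_lt)) in cycle_C.
have [along_C against_C] := count_cyc_pairs_relab j_lt sub_C0.
by rewrite oddly_orientedE def_C size_map along_C against_C.
Qed.

Lemma cycle_in_copy C : is_cycle G4 C -> ~~ has hub (behead C) ->
  exists2 j, j < 4 & {subset C <= copy j}.
Proof.
case: C => [|z [|y p]] [// _ _ /and3P [_ y_G _] /andP [_ y_path]] p_hub.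
have [j j_lt y_j] := verts_stepP y_G.
have := path_in_copy j_lt y_j y_path; rewrite belast_rcons => /(_ p_hub) p_j.
exists j => // v; rewrite !inE => /or3P [/eqP -> | /eqP -> // |].
  by apply: p_j; rewrite mem_rcons mem_head.
by move=> v_p; apply: p_j; rewrite mem_rcons inE v_p orbT.
Qed.

Lemma segment_in_copy x p z : ~~ has hub p -> path (adj G4) x (rcons p z) ->
  exists2 k, k < 4 & {subset x :: rcons p z <= copy k}.
Proof.
case: p => [|y p] p_hub /andP [/adj_step_copy [k k_lt /andP [x_k y_k]] y_path].
  by exists k => // v; rewrite !inE => /orP [] /eqP ->.
have := path_in_copy k_lt y_k y_path; rewrite belast_rcons => /(_ p_hub) p_k.
by exists k => // v; rewrite !inE => /or3P [/eqP -> | /eqP -> | /p_k].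
Qed.

Lemma hub_segment_parity x p z : hub_paths_parity G ->
  x \in hubs G4 -> z \in hubs G4 -> x != z -> ~~ has hub p ->
  uniq (x :: rcons p z) -> path (adj G4) x (rcons p z) ->
  [/\ odd (size (rcons p z)),
      odd (count (along G4) (steps (x :: rcons p z))) = ((hidx x, hidx z) \in og_arcs H1),
      odd (count (against G4) (steps (x :: rcons p z))) = ((hidx z, hidx x) \in og_arcs H1)
    & adj H1 (hidx x) (hidx z)].
Proof.
move=> G_par x_hub z_hub x_z p_hub uniq_xpz path_xpz.
have [k k_lt /lift_copy [[|x0 p0] // sub_0 [def_x def_p]]] := segment_in_copy p_hub path_xpz.
have lt_0 : all (fun v => v < N) (x0 :: p0) by apply/allP => v /sub_0/verts_lt.
have x0_lt : x0 < N by apply/verts_lt/sub_0/mem_head.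
have l0_lt : last x0 p0 < N by apply/verts_lt/sub_0/mem_last.
have def_z : z = relab G k (last x0 p0) by rewrite -last_map -def_x -def_p last_rcons.
have x0_hub : x0 \in [:: hub1 G; hub2 G] by rewrite -(mem_hubs_relab k x0_lt) -def_x.
have l0_hub : last x0 p0 \in [:: hub1 G; hub2 G] by rewrite -(mem_hubs_relab k l0_lt) -def_z.
have x0_l0 : x0 != last x0 p0.
  by apply: contra_neq x_z => /(congr1 (relab G k)); rewrite -def_x -def_z.
have uniq_0 : uniq (x0 :: p0) by move: uniq_xpz; rewrite def_x def_p -map_cons => /map_uniq.
have path_0 : path (adj G) x0 p0.
  by rewrite -(mono_path_in (adj_relab_mono k_lt) lt_0) -def_x -def_p.
have [odd_p0 along_0 against_0] := G_par _ _ uniq_0 sub_0 path_0 x0_hub l0_hub x0_l0.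
have [along_k against_k] := count_steps_relab k_lt sub_0.
rewrite def_p size_map odd_p0 def_x def_z -map_cons along_k against_k along_0 against_0.
have := copy_arc k_lt; set a := hidx _; set b := hidx _ => ab_H1.
have /negbTE ba_H1 := H1_arc_asym ab_H1.
case: G_wf => _ _ _ _ hub12; have /negbTE hub21 : hub2 G != hub1 G by rewrite eq_sym.
have [[-> ->] | [-> ->]] :
    x0 = hub1 G /\ last x0 p0 = hub2 G \/ x0 = hub2 G /\ last x0 p0 = hub1 G.
  by move: x0_hub l0_hub x0_l0; rewrite !inE => /orP [] /eqP -> /orP [] /eqP ->;
    rewrite ?eqxx //; [left | right].
  by rewrite eqxx (negbTE hub12) ab_H1 ba_H1 /adj ab_H1.
by rewrite eqxx hub21 ab_H1 ba_H1 /adj ab_H1 orbT.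
Qed.

Lemma contract_parity p x : hub_paths_parity G -> x \in hubs G4 -> uniq p ->
  path (adj G4) x p -> last x p \in hubs G4 -> path [rel a b | a != b] x (filter hub p) ->
  [/\ odd (size p) = odd (size (filter hub p)),
      odd (count (along G4) (steps (x :: p))) =
        odd (count (along H1) (steps (map hidx (x :: filter hub p)))),
      odd (count (against G4) (steps (x :: p))) =
        odd (count (against H1) (steps (map hidx (x :: filter hub p))))
    & path (adj H1) (hidx x) (map hidx (filter hub p))].
Proof.
move=> G_par; have [n] := ubnP (size p).
elim: n p x => [|n IH] p x // size_p x_hub uniq_p path_p last_hub distinct_p.
have [p_hub | ] := boolP (has hub p); last first.
  case: p {size_p uniq_p path_p distinct_p} last_hub => // y p last_hub /hasPn no_hub.
  by have := no_hub _ (mem_last y p); rewrite /= -[last y p]/(last x (y :: p)) last_hub.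
move: size_p uniq_p path_p last_hub distinct_p; case/split_find: p_hub => z p1 p2 z_hub p1_hub.
rewrite size_cat size_rcons ltnS cat_uniq cat_path last_cat last_rcons filter_cat filter_rcons.
have -> : filter hub p1 = [::] by apply/eqP; rewrite -[_ == _]negbK -has_filter.
rewrite z_hub -[rcons [::] z ++ _]/(z :: _).
move=> size_p /and3P [uniq_p1z _ uniq_p2] /andP [path_p1z path_p2] last_hub.
case/andP => /= x_z distinct_p2.
have uniq_xp1z : uniq (x :: rcons p1 z).
  rewrite /= uniq_p1z mem_rcons inE negb_or x_z andbT /=.
  by apply: contra p1_hub => x_p1; apply/hasP; exists x.
have [odd1 along1 against1 adj1] :=
  hub_segment_parity G_par x_hub z_hub x_z p1_hub uniq_xp1z path_p1z.
have [|odd2 along2 against2 path2] := IH p2 z _ z_hub uniq_p2 path_p2 last_hub distinct_p2.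
  by move: size_p; rewrite addSn; apply: leq_trans; rewrite ltnS leq_addl.
rewrite steps_cat last_rcons !count_cat !oddD along1 against1 along2 against2 !map_cons.
rewrite size_rcons /= in odd1.
by split; rewrite ?oddb ?(negbTE odd1) ?odd2 ?adj1.
Qed.

Lemma path_distinct (x : nat) p : uniq (x :: p) -> path [rel a b | a != b] x p.
Proof. by rewrite uniq_pairwise => /pairwise_sorted. Qed.

Lemma contract_hubs x p : x \in hubs G4 -> uniq (x :: p) ->
  [/\ path [rel a b | a != b] x (filter hub p), uniq (map hidx (x :: filter hub p))
    & {subset map hidx (x :: filter hub p) <= og_verts H1}].
Proof.
move=> x_hub uniq_xp.
have uniq_xf : uniq (x :: filter hub p) by have := filter_uniq hub uniq_xp; rewrite /= x_hub.
have sub_f : {subset x :: filter hub p <= hubs G4}.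
  by move=> y; rewrite inE mem_filter => /predU1P [-> | /andP []].
split; first exact: path_distinct.
  by rewrite (map_inj_in_uniq (sub_in2 sub_f hidx_inj)).
by move=> v /mapP [y /sub_f/hidx_H1 ? ->].
Qed.

Lemma hub_paths_parity_step : hub_paths_parity G -> hub_paths_parity G4.
Proof.
move=> G_par x p uniq_xp _ path_xp x_end l_end x_l.
have [i1 i2 _ _] := hub_index_step.
have e1 : hub1 H1 = hidx (hub1 G4) by rewrite i1.
have e2 : hub2 H1 = hidx (hub2 G4) by rewrite i2.
have end_hub y : y \in [:: hub1 G4; hub2 G4] -> y \in hubs G4.
  by rewrite hubs_step !inE => /orP [] ->; rewrite ?orbT.
have end_H1 y : y \in [:: hub1 G4; hub2 G4] -> hidx y \in [:: hub1 H1; hub2 H1].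
  by rewrite e1 e2 !inE => /orP [] /eqP ->; rewrite eqxx ?orbT.
have x_hub := end_hub x x_end; have l_hub := end_hub _ l_end.
have hidx_eq := inj_in_eq hidx_inj.
have [distinct_f uniq_H1 sub_H1] := contract_hubs x_hub uniq_xp.
have [odd_p along_p against_p path_f] :=
  contract_parity G_par x_hub (proj2 (andP uniq_xp)) path_xp l_hub distinct_f.
have last_f : last (hidx x) (map hidx (filter hub p)) = hidx (last x p).
  by rewrite last_map last_filter.
have [|| odd_H1 along_H1 against_H1] := H1_hub_paths_parity uniq_H1 sub_H1 path_f (end_H1 x x_end).
- by rewrite last_f; apply: end_H1.
- by rewrite last_f (hidx_eq _ _ x_hub l_hub).
have hub1_hub : hub1 G4 \in hubs G4 by apply: end_hub; rewrite mem_head.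
have hub2_hub : hub2 G4 \in hubs G4 by apply: end_hub; rewrite !inE eqxx orbT.
rewrite odd_p -(size_map hidx) odd_H1 along_p against_p map_cons along_H1 against_H1.
by rewrite e1 e2 !hidx_eq.
Qed.

Lemma cycle_through_hubs_oddly_oriented z q : hub_paths_parity G ->
  is_cycle G4 (z :: q) -> z \in hubs G4 -> has hub q -> oddly_oriented G4 (z :: q).
Proof.
move=> G_par [_ uniq_zq _ cycle_zq] z_hub q_hub.
have [distinct_q uniq_hf sub_hf] := contract_hubs z_hub uniq_zq.
have f_nil : filter hub q != [::] by rewrite -has_filter.
have distinct_f : path [rel a b | a != b] z (filter hub (rcons q z)).
  rewrite filter_rcons z_hub rcons_path distinct_q /=.
  have := filter_subseq hub q; case: (filter hub q) f_nil => // y f _ /mem_subseq f_q.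
  by apply: contraNneq (proj1 (andP uniq_zq)) => <-; apply/f_q/mem_last.
have uniq_qz : uniq (rcons q z) by rewrite rcons_uniq.
have last_hub : last z (rcons q z) \in hubs G4 by rewrite last_rcons.
have [] := contract_parity G_par z_hub uniq_qz cycle_zq last_hub distinct_f.
rewrite filter_rcons z_hub => odd_q along_q against_q path_f.
set hf := map hidx (z :: filter hub q).
have size_hf : 2 <= size hf by rewrite size_map; case: (filter hub q) f_nil.
have cycle_hf : cycle (adj H1) hf by rewrite /hf map_cons /cycle -map_rcons.
have [even_hf] := H1_cycles_oddly_oriented sub_hf uniq_hf size_hf cycle_hf.
rewrite /hf map_cons cyc_pairs_cons -map_rcons -map_cons => along_hf against_hf.
rewrite oddly_orientedE cyc_pairs_cons along_q against_q.
have -> : size (z :: q) = size (rcons q z) by rewrite size_rcons.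
by rewrite odd_q size_rcons; split; rewrite // /hf size_map in even_hf.
Qed.

Lemma cycles_oddly_oriented_step :
  cycles_oddly_oriented G -> hub_paths_parity G -> cycles_oddly_oriented G4.
Proof.
move=> G_odd G_par C C_cycle.
have [C_hub | C_nohub] := boolP (has hub C); last first.
  have [|j j_lt C_j] := cycle_in_copy C_cycle.
    by apply: contra C_nohub => /hasP [y /mem_behead y_C y_hub]; apply/hasP; exists y.
  exact: cycle_in_copy_oddly_oriented C_j.
move: C_cycle; case/split_find: C_hub => z c1 c2 z_hub _ /(is_cycle_rot (size c1)).
rewrite cat_rcons rot_size_cat => zc_cycle; apply: (oddly_oriented_rot (n := size c1)).
rewrite rot_size_cat.
have [zc_hub | zc_nohub] := boolP (has hub (c2 ++ c1)).
  exact: cycle_through_hubs_oddly_oriented.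
have [j j_lt zc_j] := cycle_in_copy zc_cycle zc_nohub.
exact: cycle_in_copy_oddly_oriented zc_j.
Qed.

Lemma wf_step : wf_ograph G4.
Proof.
case: G_wf => _ _ h1_lt h2_lt hub12.
split; rewrite -?[og_bound G4]/(4 * N) -?[hub1 G4]/(hub1 G) -?[hub2 G4]/(2 * N + hub2 G); try lia.
- apply/allP => y /verts_stepP [j j_lt /mapP [a /verts_lt a_lt ->]]; exact: relab_lt.
- apply/allP => _ /arcs_stepP [j j_lt [[a b] ab_G ->]] /=.
  have /and3P [a_G b_G a_b] := arc_ends ab_G.
  rewrite !mem_verts_step //; apply: contra_neq a_b.
  exact: relab_inj (verts_lt a_G) (verts_lt b_G).
Qed.

End Substitution.

Lemma Hstep_invariants n : let G := iter n Hstep H1 in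
  [/\ wf_ograph G, cycles_oddly_oriented G & hub_paths_parity G].
Proof.
elim: n => [|n [G_wf G_odd G_par]] /=.
  split; [by [] | | exact: H1_hub_paths_parity].
  move=> C [size_C uniq_C /allP sub_C cycle_C].
  exact: H1_cycles_oddly_oriented sub_C uniq_C (ltnW size_C) cycle_C.
split; [exact: wf_step | exact: cycles_oddly_oriented_step | exact: hub_paths_parity_step].
Qed.

Theorem theorem3 (g : nat) : 1 <= g -> pfaffian (H g).
Proof.
move=> _ C [C_cycle _].
by have [_ H_odd _] := Hstep_invariants g.-1; apply: H_odd.
Qed.
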